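(* For every horizon $T\ge 1$ and every number of actions $A\ge 2$ there exists a deterministic MDP with $A$ actions and horizon $T$ such that, with $Q^1=Q^{\pi^{\mathrm{rand}}}$ and $Q^{i+1}=\mathrm{QVI}(Q^i)$, for every $i\in\{1,\dots,T-1\}$ no policy in $\Pi(Q^i)$ is optimal.
   Context: Deterministic finite-horizon MDP $\mathcal M=(\mathcal S,\mathcal A,T,s_1,f,R)$ as usual: finite states and actions ($A=|\mathcal A|$), fixed start state $s_1$, transitions $s_{t+1}=f(s_t,a_t)$, rewards $R(s_t,a_t)$, steps $t\in[T]=\{1,\dots,T\}$, no discounting. A policy $\pi=(\pi_1,\dots,\pi_T)$ has $\pi_t:\mathcal S\to\Delta(\mathcal A)$; for deterministic $\pi_t$ write $\pi_t(s)$ for its action. $Q^\pi_t(s,a)=\mathbb E_\pi[\sum_{t'=t}^T R(s_{t'},a_{t'})\mid s_t=s,a_t=a]$. $J(\pi)=\mathbb E_\pi[\sum_{t=1}^TR(s_t,a_t)]$, and $\pi$ is optimal if $J(\pi)=\max_{\pi'}J(\pi')$. The uniformly random policy is $\pi^{\mathrm{rand}}_t(a\mid s)=1/A$. For a time-indexed function $Q=(Q_t)_{t\in[T]}$, $Q_t:\mathcal S\times\mathcal A\to\mathbb R$, Q-value iteration gives $Q'=\mathrm{QVI}(Q)$ with $Q'_t(s,a)=R(s,a)+\max_{a'\in\mathcal A}Q_{t+1}(f(s,a),a')$ for $t<T$ and $Q'_T(s,a)=R(s,a)$. $\Pi(Q)$ denotes the set of deterministic policies $\pi$ with $\pi_t(s)\in\arg\max_{a\in\mathcal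 A}Q_t(s,a)$ for all $s\in\mathcal S$, $t\in[T]$. *)

From HB Require Import structures.
From mathcomp Require Import all_boot all_order all_algebra.
From mathcomp Require Import reals.
Set Implicit Arguments. Unset Strict Implicit. Unset Printing Implicit Defensive.
Import Order.TTheory GRing.Theory Num.Theory.
Local Open Scope ring_scope.

Record mdp (R : realType) (A : nat) := MDP {
  state : finType;
  start : state;
  trans : state -> 'I_A -> state;
  rew   : state -> 'I_A -> R }.

Section MDPdefs.
Variables (R : realType) (A : nat) (M : mdp R A) (T : nat).
Local Notation S := (state M).
Local Notation f := (@trans _ _ M).
Local Notation r := (@rew _ _ M).

(* time-indexed Q-functions Q t s a, with t ranging over 1..T *)
Definition qfun := nat -> S -> 'I_A -> R.

(* stochastic (Markov, time-dependent) policies: pi t s a = pi_t(a | s) *)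
Definition spolicy := nat -> S -> 'I_A -> R.
Definition is_policy (pi : spolicy) : Prop :=
  forall t, (1 <= t <= T)%N -> forall s,
    (forall a, 0 <= pi t s a) /\ \sum_a pi t s a = 1.

Definition dpolicy := nat -> S -> 'I_A.
Definition det_to_stoch (pi : dpolicy) : spolicy :=
  fun t s a => if a == pi t s then 1 else 0.

Definition pi_rand : spolicy := fun _ _ _ => (A%:R)^-1.

(* Q^pi, computed by backward recursion over the number k of remaining steps
   after the current one: Qaux k = Q^pi_{T-k}. *)
Fixpoint Qaux (pi : spolicy) (k : nat) (s : S) (a : 'I_A) : R :=
  match k with
  | 0 => r s a
  | k'.+1 => r s a + \sum_b pi (T - k')%N (f s a) b * Qaux pi k' (f s a) b
  end.
Definition Qpi (pi : spolicy) : qfun := fun t s a => Qaux pi (T - t) s a.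

Definition J (pi : spolicy) : R := \sum_a pi 1%N (@start _ _ M) a * Qpi pi 1%N (@start _ _ M) a.

Definition optimal (pi : spolicy) : Prop :=
  forall pi' : spolicy, is_policy pi' -> J pi' <= J pi.

Definition fmax (X : finType) (F : X -> R) : R :=
  match [pick x : X] with
  | Some x0 => \big[Num.max/F x0]_(x : X) F x
  | None => 0
  end.

Definition QVI (Q : qfun) : qfun := fun t s a =>
  if (t < T)%N then r s a + fmax (fun b => Q t.+1 (f s a) b) else r s a.

Definition Qiter (i : nat) : qfun := iter i.-1 QVI (Qpi pi_rand).

Definition greedy (Q : qfun) (pi : dpolicy) : Prop :=
  forall t, (1 <= t <= T)%N -> forall s b, Q t s b <= Q t s (pi t s).

End MDPdefs.

Arguments greedy {R A} M T Q pi.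
Arguments Qiter {R A} M T i _ _ _.
Arguments optimal {R A} M T pi.
Arguments det_to_stoch {R A M} pi _ _ _.
Arguments Qpi {R A} M T pi _ _ _.
Arguments J {R A} M T pi.
Arguments QVI {R A} M T Q _ _ _.
Arguments is_policy {R A} M T pi.

From HB Require Import structures.
From mathcomp Require Import all_boot all_order all_algebra.
From mathcomp Require Import reals.
From mathcomp Require Import lra zify.
Set Implicit Arguments. Unset Strict Implicit. Unset Printing Implicit Defensive.
Import Order.TTheory GRing.Theory Num.Theory.
Local Open Scope ring_scope.

(* With A >= 2 actions take three states:
   a start state, a "chain" state and an absorbing zero-reward sink.  At the
   start, action [a_exit] pays T - 5/4 and falls into the sink, while [a_go]
   pays 0 and enters the chain; in the chain [a_go] pays 1 and stays, any
   other action pays 0 and falls into the sink.  Going forever earns T - 1,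
   so a policy exiting at time 1 is not optimal.
   Every Q^i vanishes on the sink and on the non-go chain actions, so Q^i
   only tracks the chain value; that value is underestimated (by at least
   1/2) at every time t with t + i <= T, because the random policy leaves
   the chain with probability >= 1/2 and each QVI round repairs one more
   time step only.  Hence at time 1 the look-ahead through [a_go] stays below
   the exit reward for i <= T - 1 and every greedy policy exits. *)

Lemma fmax_attained (R : realType) (X : finType) (F : X -> R) (b : X) :
  (forall x, F x <= F b) -> fmax F = F b.
Proof.
move=> Fb; rewrite /fmax; case: pickP => [x0 _|noX]; last by have := noX b.
by apply/eqP; rewrite eq_le le_bigmax andbT; apply: bigmax_le.
Qed.

Lemma sum_single (V : nmodType) (I : finType) (F : I -> V) (x : I) :
  (forall a, a != x -> F a = 0) -> \sum_a F a = F x.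
Proof. by move=> F0; rewrite (bigD1 x) //= big1 ?addr0. Qed.

Lemma backward_ind (T : nat) (P : nat -> Prop) :
  (forall t, (T <= t)%N -> P t) -> (forall t, (t < T)%N -> P t.+1 -> P t) ->
  forall t, P t.
Proof.
move=> last step t; move kE: (T - t)%N => k.
elim: k t kE => [|k IH] t kE; first by apply: last; lia.
by apply: step; [lia | apply: IH; lia].
Qed.

Lemma natr_subS (R : pzSemiRingType) (T t : nat) :
  (t < T)%N -> (T - t)%:R = (T - t.+1)%:R + 1 :> R.
Proof. by move=> tT; rewrite natr1; congr (_%:R); lia. Qed.

Section GeneralMDP.
Variables (R : realType) (A : nat) (M : mdp R A) (T : nat).

Lemma Qpi_last (pi : spolicy M) t s a : (T <= t)%N -> Qpi M T pi t s a = rew s a.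
Proof. by move=> tT; rewrite /Qpi; have -> : (T - t = 0)%N by lia. Qed.

Lemma Qpi_succ (pi : spolicy M) t s a : (t < T)%N ->
  Qpi M T pi t s a =
  rew s a + \sum_b pi t.+1 (trans s a) b * Qpi M T pi t.+1 (trans s a) b.
Proof.
move=> tT; rewrite /Qpi; have -> : (T - t = (T - t.+1).+1)%N by lia.
by rewrite /=; have -> : (T - (T - t.+1) = t.+1)%N by lia.
Qed.

Lemma Qiter_succ i : Qiter M T i.+2 = QVI M T (Qiter M T i.+1).
Proof. by []. Qed.

Lemma sum_det (pi : dpolicy M) t s (F : 'I_A -> R) :
  \sum_a det_to_stoch pi t s a * F a = F (pi t s).
Proof.
rewrite (@sum_single _ _ _ (pi t s)) /det_to_stoch ?eqxx ?mul1r // => a.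
by move/negbTE ->; rewrite mul0r.
Qed.

Lemma det_is_policy (pi : dpolicy M) : is_policy M T (det_to_stoch pi).
Proof.
move=> t _ s; split; first by move=> a; rewrite /det_to_stoch; case: ifP.
by rewrite -[RHS](sum_det pi t s (fun _ => 1)); apply: eq_bigr => a _; rewrite mulr1.
Qed.

Lemma J_det (pi : dpolicy M) :
  J M T (det_to_stoch pi) = Qpi M T (det_to_stoch pi) 1 (start M) (pi 1%N (start M)).
Proof. exact: sum_det. Qed.
End GeneralMDP.

Section ChainMDP.
Variables (R : realType) (T n : nat).
Local Notation A := n.+2.

Definition s_start : 'I_3 := @Ordinal 3 0 isT.
Definition s_chain : 'I_3 := @Ordinal 3 1 isT.
Definition s_sink  : 'I_3 := @Ordinal 3 2 isT.
Definition a_exit : 'I_A := @Ordinal A 0 isT.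
Definition a_go   : 'I_A := @Ordinal A 1 isT.

Definition chain_trans (s : 'I_3) (a : 'I_A) : 'I_3 :=
  if (s != s_sink) && (a == a_go) then s_chain else s_sink.

(* A quarter less than the optimal return T - 1. *)
Definition exit_reward : R := T%:R - 1 - 4^-1.

Definition chain_rew (s : 'I_3) (a : 'I_A) : R :=
  if s == s_start then (if a == a_exit then exit_reward else 0)
  else if (s == s_chain) && (a == a_go) then 1 else 0.

Definition chainMDP : mdp R A := @MDP R A 'I_3 s_start chain_trans chain_rew.
Local Notation M := chainMDP.
Local Notation Qrand := (Qpi M T (pi_rand (M:=M))).

Lemma chain_sink a : (rew (m:=M) s_sink a = 0) * (trans (m:=M) s_sink a = s_sink).
Proof. by []. Qed.

Lemma chain_off a : a != a_go ->
  (rew (m:=M) s_chain a = 0) * (trans (m:=M) s_chain a = s_sink).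
Proof. by move/negbTE => ago; rewrite /= /chain_rew /chain_trans ago. Qed.

Lemma chain_go : (rew (m:=M) s_chain a_go = 1) * (trans (m:=M) s_chain a_go = s_chain).
Proof. by []. Qed.

Lemma start_exit :
  (rew (m:=M) s_start a_exit = exit_reward) * (trans (m:=M) s_start a_exit = s_sink).
Proof. by []. Qed.

Lemma start_go : (rew (m:=M) s_start a_go = 0) * (trans (m:=M) s_start a_go = s_chain).
Proof. by []. Qed.

Lemma Qpi_sink (pi : spolicy M) t a : Qpi M T pi t s_sink a = 0.
Proof.
move: t a; apply: (@backward_ind T) => [t tT|t tT IH] a; first by rewrite Qpi_last.
by rewrite Qpi_succ // !chain_sink big1 ?addr0 // => b _; rewrite IH mulr0.
Qed.

Lemma Qpi_off (pi : spolicy M) t a : a != a_go -> Qpi M T pi t s_chain a = 0.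
Proof.
move=> ago; have [tT|Tt] := ltnP t T; last by rewrite Qpi_last // chain_off.
by rewrite Qpi_succ // !chain_off // big1 ?addr0 // => b _; rewrite Qpi_sink mulr0.
Qed.

Lemma Qpi_go (pi : spolicy M) t : (t < T)%N ->
  Qpi M T pi t s_chain a_go = 1 + pi t.+1 s_chain a_go * Qpi M T pi t.+1 s_chain a_go.
Proof.
move=> tT; rewrite Qpi_succ // !chain_go (@sum_single _ _ _ a_go) // => b bgo.
by rewrite Qpi_off // mulr0.
Qed.

Lemma inv_arity : 0 <= (A%:R : R)^-1 <= 2^-1.
Proof. by rewrite invr_ge0 ler0n lef_pV2 ?posrE ?ltr0n // ler_nat. Qed.

Lemma rand_go_bounds t :
  0 <= Qrand t s_chain a_go <= (T - t)%:R + 1 /\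
  ((t < T)%N -> Qrand t s_chain a_go <= (T - t)%:R + 2^-1).
Proof.
move: t; apply: (@backward_ind T) => [t tT|t tT [/andP[q0 q1] _]].
  have -> : (T - t = 0)%N by lia.
  by rewrite Qpi_last // chain_go add0r ler01 lexx; split=> //; lia.
have /andP[invA0 invA] := inv_arity.
rewrite Qpi_go // natr_subS // /pi_rand.
set q := Qpi _ _ _ _ _ _ in q0 q1 *.
have : (A%:R : R)^-1 * q <= 2^-1 * q by rewrite ler_wpM2r.
have : 0 <= (A%:R : R)^-1 * q by rewrite mulr_ge0.
have : 0 <= (T - t.+1)%:R :> R by [].
move: ((A%:R : R)^-1 * q) => u x0 u0 uq.
by split=> [|_]; [apply/andP; split|]; lra.
Qed.

Record shaped (Q : qfun M) : Prop := Shaped {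
  shaped_sink : forall t a, Q t s_sink a = 0;
  shaped_off : forall t a, a != a_go -> Q t s_chain a = 0;
  shaped_go : forall t, 0 <= Q t s_chain a_go }.

Definition chain_bound (Q : qfun M) (d : nat) : Prop :=
  forall t, (t + d <= T)%N -> Q t s_chain a_go <= (T - t)%:R + 2^-1.

Lemma fmax_shaped_sink (Q : qfun M) t : shaped Q -> fmax (Q t s_sink) = 0.
Proof.
by case=> Q0 _ _; rewrite (@fmax_attained _ _ _ a_go) // => b; rewrite !Q0.
Qed.

Lemma fmax_shaped_chain (Q : qfun M) t :
  shaped Q -> fmax (Q t s_chain) = Q t s_chain a_go.
Proof.
case=> _ Qoff Qgo; apply: fmax_attained => b.
by have [->|/Qoff ->] := eqVneq b a_go.
Qed.

Lemma rand_shaped : shaped Qrand.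
Proof.
split=> [t a|t a|t]; [exact: Qpi_sink | exact: Qpi_off |].
by case: (rand_go_bounds t) => /andP[].
Qed.

Lemma rand_bound : chain_bound Qrand 1.
Proof. by move=> t tT; apply: (rand_go_bounds t).2; rewrite addn1 in tT. Qed.

Lemma QVI_shaped (Q : qfun M) : shaped Q -> shaped (QVI M T Q).
Proof.
move=> Qs; split=> [t a|t a ago|t]; rewrite /QVI.
- by rewrite !chain_sink fmax_shaped_sink // addr0; case: ifP.
- by rewrite !chain_off // fmax_shaped_sink // addr0; case: ifP.
- rewrite !chain_go fmax_shaped_chain //; case: ifP => _ //.
  by rewrite addr_ge0 ?ler01 //; case: Qs.
Qed.

Lemma QVI_bound (Q : qfun M) d :
  shaped Q -> chain_bound Q d -> chain_bound (QVI M T Q) d.+1.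
Proof.
move=> Qs Qb t tdT; have tT : (t < T)%N by lia.
rewrite /QVI tT !chain_go fmax_shaped_chain // natr_subS //.
by have := Qb t.+1 ltac:(lia); lra.
Qed.

Lemma Qiter_invariant i :
  shaped (Qiter M T i.+1) /\ chain_bound (Qiter M T i.+1) i.+1.
Proof.
elim: i => [|i [Qs Qb]]; first by split; [exact: rand_shaped | exact: rand_bound].
by rewrite Qiter_succ; split; [exact: QVI_shaped | exact: QVI_bound].
Qed.

Definition favors_exit (Q : qfun M) : Prop :=
  exists2 V : 'I_3 -> R,
    (forall b, Q 1%N s_start b = rew (m:=M) s_start b + V (trans (m:=M) s_start b))
    & V s_sink = 0 /\ V s_chain < exit_reward.

Lemma rand_favors_exit : (2 <= T)%N -> favors_exit Qrand.
Proof.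
move=> T2; exists (fun s => \sum_b pi_rand (M:=M) 2%N s b * Qrand 2%N s b).
  by move=> b; rewrite Qpi_succ.
split; first by rewrite big1 // => b _; rewrite Qpi_sink mulr0.
rewrite (@sum_single _ _ _ a_go) => [|b bgo]; last by rewrite Qpi_off ?mulr0.
have [/andP[q0 q1] _] := rand_go_bounds 2.
have /andP[_ invA] := inv_arity.
have TR : 2%:R <= T%:R :> R by rewrite ler_nat.
have := ler_wpM2r q0 invA; rewrite natrB // in q1; rewrite /exit_reward.
by move: (_ * Qrand _ _ _) => u; lra.
Qed.

Lemma QVI_favors_exit j : (j + 3 <= T)%N -> favors_exit (Qiter M T j.+2).
Proof.
move=> jT; have [Qs Qb] := Qiter_invariant j; have T2 : (2 <= T)%N by lia.
exists (fun s => fmax (Qiter M T j.+1 2%N s)).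
  by move=> b; rewrite Qiter_succ /QVI T2.
split; first exact: fmax_shaped_sink.
have TR : 2%:R <= T%:R :> R by rewrite ler_nat.
rewrite fmax_shaped_chain //; have := Qb 2%N ltac:(lia).
by rewrite /exit_reward natrB //; lra.
Qed.

Lemma Qiter_favors_exit i : (1 <= i <= T - 1)%N -> favors_exit (Qiter M T i).
Proof.
case: i => [|[|j]] // /andP[_ iT]; first by apply: rand_favors_exit; lia.
by apply: QVI_favors_exit; lia.
Qed.

Lemma favors_exit_greedy (Q : qfun M) (pi : dpolicy M) : (2 <= T)%N ->
  favors_exit Q -> greedy M T Q pi -> pi 1%N s_start = a_exit.
Proof.
move=> T2 [V QV [V0 Vc]] pi_greedy; apply/eqP/negPn/negP => piexit.
have := pi_greedy 1%N ltac:(lia) s_start a_exit; rewrite !QV /=.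
rewrite /chain_rew /chain_trans /= (negbTE piexit) V0 add0r addr0.
have TR : 2%:R <= T%:R :> R by rewrite ler_nat.
by case: eqP => _; rewrite ?V0 /exit_reward in Vc *; lra.
Qed.

Definition always_go : dpolicy M := fun _ _ => a_go.

Lemma always_go_chain_value t :
  Qpi M T (det_to_stoch always_go) t s_chain a_go = (T - t)%:R + 1.
Proof.
move: t; apply: (@backward_ind T) => [t tT|t tT IH].
  have -> : (T - t = 0)%N by lia.
  by rewrite Qpi_last // chain_go add0r.
by rewrite Qpi_go // IH /det_to_stoch eqxx mul1r (natr_subS _ tT) addrC.
Qed.

(* Exiting at time 1 earns T - 5/4 < T - 1. *)
Lemma exit_not_optimal (pi : dpolicy M) : (2 <= T)%N ->
  pi 1%N s_start = a_exit -> ~ optimal M T (det_to_stoch pi).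
Proof.
move=> T2 piexit opt; have := opt _ (det_is_policy always_go).
rewrite !J_det piexit /always_go !Qpi_succ // !sum_det start_exit start_go.
rewrite Qpi_sink always_go_chain_value /exit_reward natrB //.
have TR : 2%:R <= T%:R :> R by rewrite ler_nat.
lra.
Qed.
End ChainMDP.

Theorem mainTheorem2 (R : realType) (T A : nat) :
  (1 <= T)%N -> (2 <= A)%N ->
  exists M : mdp R A,
    forall i : nat, (1 <= i <= T - 1)%N ->
      forall pi : dpolicy M,
        greedy M T (Qiter M T i) pi -> ~ optimal M T (det_to_stoch pi).
Proof.
move=> _; case: A => [|[|n]] // _.
exists (chainMDP R T n) => i iT pi pi_greedy.
have T2 : (2 <= T)%N by lia.
apply: (exit_not_optimal T2).
apply: (favors_exit_greedy T2 _ pi_greedy).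
exact: Qiter_favors_exit.
Qed.
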